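(* Let $(\kappa,M,p)$ satisfy Assumption (A), $X\in\mathfrak{X}_0$, $(R,r)$ a hypothesis, $T$ the test statistic based on $\hat\Omega_{\kappa,M,p,X}$, and $\mu_0\in\mathfrak{M}_0$. 1. If $M\in\mathbb{M}_{KV}$ and $y\notin N^*(\hat\Omega_{\kappa,M,p,X})$, then $T$ is differentiable at $\mu_0+y$. 2. Suppose $M\notin\mathbb{M}_{KV}$, $\kappa$ is continuously differentiable on the nonempty complement of a closed set $\Delta(\kappa)\subseteq\mathbb{R}$, and $y\notin N^*(\hat\Omega_{\kappa,M,p,X})$. If either (a) $M(y)\neq0$ and $i/M(y)\notin\Delta(\kappa)$ for all $|i|=1,\dots,n-p-1$, or (b) $M(y)=0$ and $\kappa$ has compact support, then $T$ is differentiable at $\mu_0+y$. 3. If $M\notin\mathbb{M}_{KV}$, then for every $\delta\ge0$ there is a multivariate polynomial $g^{(\delta)}_{\kappa,M,p}:\mathbb{R}^n\times\mathbb{R}^{n\times k}\to\mathbb{R}$, not depending on $(R,r)$, such that $\{y\notin N^*(\hat\Omega_{\kappa,M,p,X}):M(y)=\delta\}=\{y\notin N^*(\hat\Omega_{\kappa,M,p,X}):g^{(\delta)}_{\kappa,M,p}(y,X)=0\}$.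
   Context: Let $n>2$, $1\le k<n$, $\mathfrak{X}_0=\{X\in\mathbb{R}^{n\times k}:\operatorname{rank}X=k\}$; $\hat\beta_X(y)=(X'X)^{-1}X'y$, $\hat u_X(y)=y-X\hat\beta_X(y)$. Hypothesis $(R,r)$: $R\in\mathbb{R}^{q\times k}$ of rank $q\ge1$, $r\in\mathbb{R}^q$; $\mathfrak{M}_0=\{X\beta:R\beta=r\}$. Differentiable means Fréchet differentiable as a map $\mathbb{R}^n\to\mathbb{R}$ (existence of the gradient). Estimator $\hat\Omega_{\kappa,M,p,X}$ at $y$: $\hat V=X'\operatorname{diag}(\hat u_X(y))$ with columns $\hat V_{\cdot j}$; $\hat V_p=(\hat V_{\cdot(p+1)},\dots,\hat V_{\cdot n})$; $\hat V_1\in\mathbb{R}^{kp\times(n-p)}$ with $j$-th column $(\hat V_{\cdot(j+p-1)}',\dots,\hat V_{\cdot j}')'$. If $\hat V_1\hat V_1'$ invertible: $\hat A^{(p)}=(\hat A_1,\dots,\hat A_p)=\hat V_p\hat V_1'(\hat V_1\hat V_1')^{-1}$, $\hat Z=\hat V_p-\hat A^{(p)}\hat V_1$; $\check\Gamma_i=(n-p)^{-1}\sum_{j=i+1}^{n-p}\hat Z_{\cdot j}\hat Z_{\cdot(j-i)}'$, $\check\Gamma_{-i}=\check\Gamma_i'$; $\check\Psi=\sum_{|i|\le n-p-1}\kappa(i/M(y))\check\Gamma_i$ (if $M(y)=0$: weight $1$ at $i=0$, else $0$). If $I_k-\sum_l\hat A_l$ invertible with inverse $F$: $\hat\Omega_{\kappa,M,p,X}(y)=nR(X'X)^{-1}F\check\Psi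 F'(X'X)^{-1}R'$; undefined otherwise or if $M(y)$ undefined. $N^*(\hat\Omega)$: set where $\hat\Omega$ is undefined or singular. $T(y)=(R\hat\beta_X(y)-r)'\hat\Omega(y)^{-1}(R\hat\beta_X(y)-r)$ for $y\notin N^*$, else $0$. Bandwidths (undefined if $\hat Z(y)$ undefined or a denominator vanishes; tuning constants independent of $y,X$; weights vector $\omega\in\mathbb{R}^k\setminus\{0\}$, entries $\ge0$). $\mathbb{M}_{AM}$: $\hat\rho_i=\sum_{j=2}^{n-p}\hat Z_{ij}\hat Z_{i(j-1)}/\sum_{j=1}^{n-p-1}\hat Z_{ij}^2$, $\hat\sigma_i^2=(n-p-1)^{-1}\sum_{j=2}^{n-p}(\hat Z_{ij}-\hat\rho_i\hat Z_{i(j-1)})^2$, $\hat\alpha_1=\sum_i\omega_i\frac{4\hat\rho_i^2\hat\sigma_i^4}{(1-\hat\rho_i)^6(1+\hat\rho_i)^2}/\sum_i\omega_i\frac{\hat\sigma_i^4}{(1-\hat\rho_i)^4}$, $\hat\alpha_2=\sum_i\omega_i\frac{4\hat\rho_i^2\hat\sigma_i^4}{(1-\hat\rho_i)^8}/\sum_i\omega_i\frac{\hat\sigma_i^4}{(1-\hat\rho_i)^4}$, $M=c_1(\hat\alpha_jn)^{c_2}$, $c_1,c_2>0$, $j\in\{1,2\}$. $\mathbb{M}_{NW}$: $w(i)\ge0$, $w(0)=1$, $\bar\sigma_i=\omega'\check\Gamma_{|i|}\omega$, $M=\bar c_2([\sum_i|i|^{\bar c_1}w(i)\bar\sigma_i/\sum_iw(i)\bar\sigma_i]^2n)^{\bar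 c_3}$, $\bar c_1\in\mathbb{N}$, $\bar c_2,\bar c_3>0$. $\mathbb{M}_{KV}$: constants $M>0$. Assumption (A): (i) $\kappa$ even, continuous, $\kappa(0)=1$, $\kappa(x)\to0$ as $x\to\infty$, $(\kappa((i-j)/s))_{i,j=1}^J$ positive definite for all $s>0$, $J\in\mathbb{N}$; (ii) $M\in\mathbb{M}_{AM}\cup\mathbb{M}_{NW}\cup\mathbb{M}_{KV}$; (iii) $p\in\mathbb{Z}$, $1\le p\le n/(k+1)$. *)

From mathcomp Require Import all_boot all_order all_algebra.
From mathcomp Require Import all_classical all_reals all_analysis.
Import GRing.Theory Num.Theory numFieldNormedType.Exports.

Set Implicit Arguments.
Unset Strict Implicit.
Unset Printing Implicit Defensive.

Local Open Scope ring_scope.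
Local Open Scope classical_set_scope.

(* Entry of a matrix addressed by natural-number indices (0-based); 0 when
   out of range (only ever used in range below). *)
Definition mxe (R : ringType) (m N : nat) (A : 'M[R]_(m, N)) (i j : nat) : R :=
  match (insub i : option 'I_m), (insub j : option 'I_N) with
  | Some i', Some j' => A i' j'
  | _, _ => 0
  end.

Section Defs.
End Defs.

Definition beta_hat (R : realType) (n k : nat) (X : 'M[R]_(n, k)) (y : 'cV[R]_n)
  : 'cV[R]_k := invmx (X^T *m X) *m X^T *m y.

Definition u_hat (R : realType) (n k : nat) (X : 'M[R]_(n, k)) (y : 'cV[R]_n)
  : 'cV[R]_n := y - X *m beta_hat X y.

Definition Vhat (R : realType) (n k : nat) (X : 'M[R]_(n, k)) (y : 'cV[R]_n)
  : 'M[R]_(k, n) := \matrix_(a < k, j < n) (X j a * u_hat X y j ord0).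

(* \hat V_p = (\hat V_{.(p+1)}, ..., \hat V_{.n})  (0-based: column j is column j+p) *)
Definition Vp (R : realType) (n k p : nat) (X : 'M[R]_(n, k)) (y : 'cV[R]_n)
  : 'M[R]_(k, n - p) := \matrix_(a < k, j < n - p) mxe (Vhat X y) a (j + p).

(* \hat V_1 : kp x (n-p); (1-based) column j is (V_{j+p-1}', ..., V_j')'.
   0-based: row index r = l*k + a (block l < p, entry a < k) of column j is
   entry a of column j+p-l-1 of \hat V. *)
Definition V1 (R : realType) (n k p : nat) (X : 'M[R]_(n, k)) (y : 'cV[R]_n)
  : 'M[R]_(k * p, n - p) :=
  \matrix_(r < k * p, j < n - p) mxe (Vhat X y) (r %% k) (j + p - r %/ k - 1)%N.

Definition Ahat (R : realType) (n k p : nat) (X : 'M[R]_(n, k)) (y : 'cV[R]_n)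
  : 'M[R]_(k, k * p) :=
  Vp p X y *m (V1 p X y)^T *m invmx (V1 p X y *m (V1 p X y)^T).

Definition Zhat (R : realType) (n k p : nat) (X : 'M[R]_(n, k)) (y : 'cV[R]_n)
  : option 'M[R]_(k, n - p) :=
  if V1 p X y *m (V1 p X y)^T \in unitmx
  then Some (Vp p X y - Ahat p X y *m V1 p X y) else None.

(* \sum_{l=1}^p \hat A_l ; \hat A_l = columns (l-1)k+1 .. lk of \hat A^{(p)} *)
Definition sumA (R : realType) (n k p : nat) (X : 'M[R]_(n, k)) (y : 'cV[R]_n)
  : 'M[R]_k :=
  \matrix_(a < k, b < k) \sum_(l < p) mxe (Ahat p X y) a (l * k + b)%N.

(* \check\Gamma_i, i >= 0, for Z : k x N (here N = n - p):
   N^{-1} \sum_{j=i+1}^{N} Z_{.j} Z_{.(j-i)}'  (1-based), written 0-based. *)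
Definition Gam (R : realType) (k N : nat) (Z : 'M[R]_(k, N)) (i : nat) : 'M[R]_k :=
  (N%:R)^-1 *: \matrix_(a < k, b < k)
     \sum_(i <= j < N) mxe Z a j * mxe Z b (j - i)%N.

Definition GamZ (R : realType) (k N : nat) (Z : 'M[R]_(k, N)) (i : int) : 'M[R]_k :=
  if (0 <= i)%R then Gam Z `|i|%N else (Gam Z `|i|%N)^T.

Definition kweight (R : realType) (kappa : R -> R) (m : R) (i : int) : R :=
  if m == 0 then (if i == 0 then 1 else 0) else kappa (i%:~R / m).

(* \check\Psi = \sum_{|i| <= N-1} w_i \check\Gamma_i ; index i = j - (N-1), j < 2N-1 *)
Definition Psi (R : realType) (k N : nat) (kappa : R -> R) (m : R) (Z : 'M[R]_(k, N))
  : 'M[R]_k :=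
  \sum_(j < (N.*2).-1)
     kweight kappa m (j%:Z - (N.-1)%:Z) *: GamZ Z (j%:Z - (N.-1)%:Z).

(* bandwidth: a (possibly undefined) function of the design X and the data y *)
Definition bandwidth (R : realType) (n k : nat) :=
  'M[R]_(n, k) -> 'cV[R]_n -> option R.

Definition Omega_hat (R : realType) (n k p q : nat) (kappa : R -> R)
  (M : bandwidth R n k) (X : 'M[R]_(n, k)) (Rm : 'M[R]_(q, k)) (y : 'cV[R]_n)
  : option 'M[R]_q :=
  match Zhat p X y, M X y with
  | Some Z, Some m =>
      let G := 1%:M - sumA p X y in
      if G \in unitmx then
        let F := invmx G in
        let XXi := invmx (X^T *m X) in
        Some (n%:R *: (Rm *m XXi *m F *m Psi kappa m Z *m F^T *m XXi *m Rm^T))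
      else None
  | _, _ => None
  end.

Definition Nstar (R : realType) (n k p q : nat) (kappa : R -> R)
  (M : bandwidth R n k) (X : 'M[R]_(n, k)) (Rm : 'M[R]_(q, k)) (y : 'cV[R]_n) : Prop :=
  match Omega_hat p kappa M X Rm y with
  | Some Om => Om \notin unitmx
  | None => True
  end.

Definition Tstat (R : realType) (n k p q : nat) (kappa : R -> R)
  (M : bandwidth R n k) (X : 'M[R]_(n, k)) (Rm : 'M[R]_(q, k)) (r : 'cV[R]_q)
  (y : 'cV[R]_n) : R :=
  match Omega_hat p kappa M X Rm y with
  | Some Om =>
      if Om \in unitmx then
        let d := Rm *m beta_hat X y - r in ((d^T *m invmx Om *m d) ord0 ord0)
      else 0
  | None => 0
  end.

Definition weight_ok (R : realType) (k : nat) (w : 'cV[R]_k) : Prop :=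
  w != 0 /\ forall i, 0 <= w i ord0.

(* Andrews-type (AM) bandwidth; jone = true means \hat\alpha_1, false \hat\alpha_2 *)
Definition bw_AM (R : realType) (n k p : nat) (c1 c2 : R) (jone : bool)
  (w : 'cV[R]_k) (X : 'M[R]_(n, k)) (y : 'cV[R]_n) : option R :=
  match Zhat p X y with
  | None => None
  | Some Z =>
      let N := (n - p)%N in
      let rden i := \sum_(0 <= j < N.-1) mxe Z i j ^+ 2 in
      let rho i := (\sum_(1 <= j < N) mxe Z i j * mxe Z i j.-1) / rden i in
      let s2 i := (N.-1)%:R^-1 *
                  \sum_(1 <= j < N) (mxe Z i j - rho i * mxe Z i j.-1) ^+ 2 in
      let den := \sum_(i < k) w i ord0 * (s2 i ^+ 2 / (1 - rho i) ^+ 4) in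
      let num := if jone then
          \sum_(i < k) w i ord0 * (4 * rho i ^+ 2 * s2 i ^+ 2 /
                                  ((1 - rho i) ^+ 6 * (1 + rho i) ^+ 2))
        else
          \sum_(i < k) w i ord0 * (4 * rho i ^+ 2 * s2 i ^+ 2 / (1 - rho i) ^+ 8) in
      if [forall i : 'I_k, (rden i != 0) && (1 - rho i != 0)
                           && (jone ==> (1 + rho i != 0))] && (den != 0)
      then Some (c1 * powR (num / den * n%:R) c2)
      else None
  end.

Definition bw_NW (R : realType) (n k p : nat) (wt : int -> R) (c1 : nat) (c2 c3 : R)
  (w : 'cV[R]_k) (X : 'M[R]_(n, k)) (y : 'cV[R]_n) : option R :=
  match Zhat p X y with
  | None => None
  | Some Z =>
      let N := (n - p)%N in
      let sb (i : int) := (w^T *m Gam Z `|i|%N *m w) ord0 ord0 in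
      let num := \sum_(j < (N.*2).-1)
          let i := (j%:Z - (N.-1)%:Z)%R in (`|i|%N%:R) ^+ c1 * wt i * sb i in
      let den := \sum_(j < (N.*2).-1)
          let i := (j%:Z - (N.-1)%:Z)%R in wt i * sb i in
      if den != 0 then Some (c2 * powR ((num / den) ^+ 2 * n%:R) c3) else None
  end.

Definition isAM (R : realType) (n k p : nat) (M : bandwidth R n k) : Prop :=
  exists (c1 c2 : R) (jone : bool) (w : 'cV[R]_k),
    [/\ 0 < c1, 0 < c2, weight_ok w & forall X y, M X y = bw_AM p c1 c2 jone w X y].

Definition isNW (R : realType) (n k p : nat) (M : bandwidth R n k) : Prop :=
  exists (wt : int -> R) (c1 : nat) (c2 c3 : R) (w : 'cV[R]_k),
    [/\ (forall i, 0 <= wt i) /\ wt 0 = 1, (0 < c1)%N, 0 < c2 /\ 0 < c3,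
        weight_ok w & forall X y, M X y = bw_NW p wt c1 c2 c3 w X y].

Definition isKV (R : realType) (n k : nat) (M : bandwidth R n k) : Prop :=
  exists c : R, 0 < c /\ forall X y, M X y = Some c.

Definition posdef (R : realType) (J : nat) (A : 'M[R]_J) : Prop :=
  forall v : 'cV[R]_J, v != 0 -> 0 < (v^T *m A *m v) ord0 ord0.

Definition assumptionA (R : realType) (n k p : nat) (kappa : R -> R)
  (M : bandwidth R n k) : Prop :=
  [/\
      (forall x, kappa (- x) = kappa x) /\ continuous kappa /\ kappa 0 = 1 /\
      (kappa x @[x --> +oo] --> 0) /\
      (forall (s : R), 0 < s -> forall J : nat,
          posdef (\matrix_(i < J, j < J) kappa ((i%:R - j%:R) / s))),
      isAM p M \/ isNW p M \/ isKV M &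
      (1 <= p)%N /\ (p * (k + 1) <= n)%N].

Inductive pexpr (R : Type) (V : Type) : Type :=
| PConst of R
| PVar of V
| PAdd of pexpr R V & pexpr R V
| PMul of pexpr R V & pexpr R V.

Fixpoint peval (R : ringType) (V : Type) (env : V -> R) (e : pexpr R V) : R :=
  match e with
  | PConst c => c
  | PVar v => env v
  | PAdd a b => peval env a + peval env b
  | PMul a b => peval env a * peval env b
  end.

Definition yX_env (R : realType) (n k : nat) (y : 'cV[R]_n) (X : 'M[R]_(n, k))
  : 'I_n + ('I_n * 'I_k) -> R :=
  fun v => match v with inl i => y i ord0 | inr (a, b) => X a b end.

(* Every ingredient of [T] (the OLS residuals, the VAR prewhitening, the [Gamma_i],
   and the inverses of [X'X], [V1 V1'], [I - sum A_l] and [Omega] through adjugates) is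
   built from [y] by ring operations and divisions by quantities that are nonzero at
   the point considered.  Functions obtained this way form a class closed under the
   field operations relative to a filter telling where denominators may be inverted
   ([field_closed]).  The AM and NW bandwidths are [c * s ^ c'] with [s] in the class.
   - With "differentiable at z" and the neighbourhood filter of z, [T] is
     differentiable at z as soon as the kernel weights [kappa (i / M)] are.  They are
     constant for a fixed bandwidth; under (a) [s z > 0], so [M] is differentiable and
     [kappa] is differentiable at every lag [i / M z]; under (b) [M -> 0], so all
     nonzero lags leave the compact support of [kappa] and the weights are locally
     constant.
   - With "ratio of polynomials on the set where everything is defined", [M = delta]
     iff [s = (delta / c) ^ (1 / c')], i.e. iff the numerator of [s - (delta/c)^(1/c')]
     vanishes.
   Adding [X beta] to [y] changes only [beta_hat], which moves the hypotheses from [y]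
   to [mu0 + y]. *)

From mathcomp Require Import all_boot all_order all_algebra.
From mathcomp Require Import all_classical all_reals all_analysis.
From mathcomp Require Import zify.
Import Order.TTheory GRing.Theory Num.Theory numFieldNormedType.Exports.
Local Open Scope ring_scope.
Local Open Scope classical_set_scope.
Set Implicit Arguments.
Unset Strict Implicit.

Lemma XtX_unit (R : realType) n k (X : 'M[R]_(n, k)) : \rank X = k -> X^T *m X \in unitmx.
Proof.
move=> rkX; rewrite -row_free_unit; apply/inj_row_free => v vXX0.
have vX0 : v *m X^T = 0.
  have sq0 : (v *m X^T) *m (v *m X^T)^T = 0.
    by rewrite trmx_mul trmxK mulmxA -(mulmxA v) vXX0 mul0mx.
  apply/matrixP => i j; rewrite (ord1 i) [RHS]mxE.
  move: (congr1 (fun A : 'M[R]_1 => A ord0 ord0) sq0); rewrite [LHS]mxE [RHS]mxE => /eqP.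
  under eq_bigr => l _ do rewrite [(v *m X^T)^T _ _]mxE -expr2.
  rewrite psumr_eq0; last by move=> l _; rewrite sqr_ge0.
  by move=> /allP /(_ j (mem_index_enum _)); rewrite sqrf_eq0 => /eqP.
have : row_free X^T by rewrite /row_free mxrank_tr rkX.
by move/row_free_inj; apply; rewrite vX0 mul0mx.
Qed.

Definition Zresid (R : realType) n k p (X : 'M[R]_(n, k)) (y : 'cV[R]_n) : 'M[R]_(k, n - p) :=
  Vp p X y - Ahat p X y *m V1 p X y.

Lemma Zhat_unitE (R : realType) n k p (X : 'M[R]_(n, k)) y :
  V1 p X y *m (V1 p X y)^T \in unitmx -> Zhat p X y = Some (Zresid p X y).
Proof. by rewrite /Zhat => ->. Qed.

Lemma Zhat_unit (R : realType) n k p (X : 'M[R]_(n, k)) y :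
  Zhat p X y <> None -> V1 p X y *m (V1 p X y)^T \in unitmx.
Proof. by rewrite /Zhat; case: ifP. Qed.

Lemma Omega_hat_defined (R : realType) n k p q kappa (M : bandwidth R n k)
    (X : 'M[R]_(n, k)) (Rm : 'M[R]_(q, k)) y :
  ~ Nstar p kappa M X Rm y ->
  exists Om, [/\ Zhat p X y <> None, M X y <> None, 1%:M - sumA p X y \in unitmx,
    Omega_hat p kappa M X Rm y = Some Om & Om \in unitmx].
Proof.
rewrite /Nstar /Omega_hat.
case: (Zhat p X y) => [Z|] //; case: (M X y) => [m|] //.
case: ifP => // G_unit /negP/negbNE Om_unit.
by eexists; split; last exact: Om_unit.
Qed.

Section ShiftInvariance.
Context {R : realType} {n k : nat} (X : 'M[R]_(n, k)) (beta : 'cV[R]_k).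
Hypothesis XX_unit : X^T *m X \in unitmx.

Lemma u_hat_shift y : u_hat X (X *m beta + y) = u_hat X y.
Proof.
rewrite /u_hat /beta_hat !mulmxDr.
have -> : invmx (X^T *m X) *m X^T *m (X *m beta) = beta.
  by rewrite -mulmxA (mulmxA X^T) mulmxA mulVmx // mul1mx.
by rewrite opprD addrACA subrr add0r.
Qed.

Lemma Vhat_shift y : Vhat X (X *m beta + y) = Vhat X y.
Proof. by apply/matrixP => a j; rewrite [LHS]mxE [RHS]mxE u_hat_shift. Qed.

Lemma Zhat_shift p y : Zhat p X (X *m beta + y) = Zhat p X y.
Proof. by rewrite /Zhat /Ahat /V1 /Vp Vhat_shift. Qed.

Lemma sumA_shift p y : sumA p X (X *m beta + y) = sumA p X y.
Proof. by rewrite /sumA /Ahat /V1 /Vp Vhat_shift. Qed.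

Lemma bandwidth_shift p kappa (M : bandwidth R n k) y :
  assumptionA p kappa M -> M X (X *m beta + y) = M X y.
Proof.
case=> _ [[c1 [c2 [jone [w [_ _ _ E]]]]]|[[wt [c1 [c2 [c3 [w [_ _ _ _ E]]]]]]|[c [_ E]]]] _;
  by rewrite !E // /bw_AM /bw_NW Zhat_shift.
Qed.

Lemma Nstar_shift p q kappa (M : bandwidth R n k) (Rm : 'M[R]_(q, k)) y :
  assumptionA p kappa M ->
  Nstar p kappa M X Rm (X *m beta + y) <-> Nstar p kappa M X Rm y.
Proof.
by move=> HA; rewrite /Nstar /Omega_hat Zhat_shift (bandwidth_shift _ HA) sumA_shift.
Qed.

End ShiftInvariance.

Section BandwidthFormulas.
Context {R : realType} {k N : nat} (w : 'cV[R]_k) (Z : 'M[R]_(k, N)).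

Definition am_rden (i : nat) : R := \sum_(0 <= j < N.-1) mxe Z i j ^+ 2.
Definition am_rho (i : nat) : R := (\sum_(1 <= j < N) mxe Z i j * mxe Z i j.-1) / am_rden i.
Definition am_s2 (i : nat) : R :=
  (N.-1)%:R^-1 * \sum_(1 <= j < N) (mxe Z i j - am_rho i * mxe Z i j.-1) ^+ 2.
Definition am_den : R := \sum_(i < k) w i ord0 * (am_s2 i ^+ 2 / (1 - am_rho i) ^+ 4).
Definition am_num (jone : bool) : R :=
  if jone then
    \sum_(i < k) w i ord0 * (4 * am_rho i ^+ 2 * am_s2 i ^+ 2 /
                             ((1 - am_rho i) ^+ 6 * (1 + am_rho i) ^+ 2))
  else \sum_(i < k) w i ord0 * (4 * am_rho i ^+ 2 * am_s2 i ^+ 2 / (1 - am_rho i) ^+ 8).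
Definition am_regular (jone : bool) : bool :=
  [forall i : 'I_k, (am_rden i != 0) && (1 - am_rho i != 0) && (jone ==> (1 + am_rho i != 0))].
Definition am_cond (jone : bool) : bool := am_regular jone && (am_den != 0).
Definition am_base (n : nat) (jone : bool) : R := am_num jone / am_den * n%:R.

Definition nw_sb (i : int) : R := (w^T *m Gam Z `|i|%N *m w) ord0 ord0.
Definition nw_num (wt : int -> R) (c1 : nat) : R :=
  \sum_(j < (N.*2).-1)
    let i := (j%:Z - (N.-1)%:Z)%R in (`|i|%N%:R) ^+ c1 * wt i * nw_sb i.
Definition nw_den (wt : int -> R) : R :=
  \sum_(j < (N.*2).-1) let i := (j%:Z - (N.-1)%:Z)%R in wt i * nw_sb i.
Definition nw_base (n : nat) (wt : int -> R) (c1 : nat) : R :=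
  (nw_num wt c1 / nw_den wt) ^+ 2 * n%:R.

Lemma am_base_ge0 n jone : (forall i, 0 <= w i ord0) -> 0 <= am_base n jone.
Proof.
have num_ge0 (i : 'I_k) : 0 <= 4 * am_rho i ^+ 2 * am_s2 i ^+ 2.
  by apply: mulr_ge0; [apply: mulr_ge0; [apply: ler0n | apply: sqr_ge0] | apply: sqr_ge0].
move=> w_ge0; apply: mulr_ge0 => //; apply: divr_ge0.
  rewrite /am_num; case: jone; apply: sumr_ge0 => i _; apply: mulr_ge0 => //.
    by apply: divr_ge0 => //; apply: mulr_ge0; apply: exprn_even_ge0.
  by apply: divr_ge0 => //; apply: exprn_even_ge0.
apply: sumr_ge0 => i _; apply: mulr_ge0 => //.
by apply: divr_ge0; [apply: sqr_ge0 | apply: exprn_even_ge0].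
Qed.

Lemma nw_base_ge0 n wt c1 : 0 <= nw_base n wt c1.
Proof. by rewrite mulr_ge0 ?sqr_ge0. Qed.

End BandwidthFormulas.

Lemma bw_AM_E (R : realType) n k p c1 c2 jone w (X : 'M[R]_(n, k)) y :
  bw_AM p c1 c2 jone w X y =
  if Zhat p X y is Some Z then
    if am_cond w Z jone then Some (c1 * powR (am_base w Z n jone) c2) else None
  else None.
Proof. by []. Qed.

Lemma bw_NW_E (R : realType) n k p wt c1 c2 c3 w (X : 'M[R]_(n, k)) y :
  bw_NW p wt c1 c2 c3 w X y =
  if Zhat p X y is Some Z then
    if nw_den w Z wt != 0 then Some (c2 * powR (nw_base w Z n wt c1) c3) else None
  else None.
Proof. by []. Qed.

Record field_closed {R : realType} {T : Type} (F : set_system T) (C : (T -> R) -> Prop)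
    : Prop := FieldClosed {
  closed_filter : Filter F;
  closed_cst : forall c : R, C (fun _ => c);
  closed_add : forall f g, C f -> C g -> C (fun t => f t + g t);
  closed_mul : forall f g, C f -> C g -> C (fun t => f t * g t);
  closed_inv : forall f, C f -> (\forall t \near F, f t != 0) -> C (fun t => (f t)^-1);
  closed_near : forall f g, C f -> (\forall t \near F, f t = g t) -> C g }.

Definition mx_closed {R : realType} {T : Type} (C : (T -> R) -> Prop) (a b : nat)
  (A : T -> 'M[R]_(a, b)) : Prop := forall i j, C (fun t => A t i j).

Section FieldClosedClass.
Context {R : realType} {T : Type} (F : set_system T) (C : (T -> R) -> Prop).
Context (HC : field_closed F C).
#[local] Instance closed_filter_instance : Filter F := closed_filter HC.

Lemma closed_ext f g : (forall t, f t = g t) -> C f -> C g.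
Proof. by move=> fg Cf; apply: (closed_near HC Cf); apply: filterE. Qed.

Lemma closed_opp f : C f -> C (fun t => - f t).
Proof.
by move=> Cf; apply: (closed_ext _ (closed_mul HC (closed_cst HC (-1)) Cf)) => t; rewrite mulN1r.
Qed.

Lemma closed_sub f g : C f -> C g -> C (fun t => f t - g t).
Proof. by move=> Cf Cg; apply: (closed_add HC Cf); apply: closed_opp. Qed.

Lemma closed_expr f m : C f -> C (fun t => f t ^+ m).
Proof.
move=> Cf; elim: m => [|m IHm].
  by apply: (closed_ext _ (closed_cst HC 1)) => t; rewrite expr0.
by apply: (closed_ext _ (closed_mul HC Cf IHm)) => t; rewrite exprS.
Qed.

Lemma closed_div f g :
  C f -> C g -> (\forall t \near F, g t != 0) -> C (fun t => f t / g t).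
Proof. by move=> Cf Cg g_neq0; apply: (closed_mul HC Cf); apply: (closed_inv HC). Qed.

Lemma closed_sum (I : Type) (r : seq I) (P : pred I) (G : I -> T -> R) :
  (forall i, P i -> C (G i)) -> C (fun t => \sum_(i <- r | P i) G i t).
Proof.
move=> CG; elim: r => [|a r IHr].
  by apply: (closed_ext _ (closed_cst HC 0)) => t; rewrite big_nil.
case Pa: (P a).
  by apply: (closed_ext _ (closed_add HC (CG a Pa) IHr)) => t; rewrite big_cons Pa.
by apply: (closed_ext _ IHr) => t; rewrite big_cons Pa.
Qed.

Lemma closed_prod (I : Type) (r : seq I) (P : pred I) (G : I -> T -> R) :
  (forall i, P i -> C (G i)) -> C (fun t => \prod_(i <- r | P i) G i t).
Proof.
move=> CG; elim: r => [|a r IHr].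
  by apply: (closed_ext _ (closed_cst HC 1)) => t; rewrite big_nil.
case Pa: (P a).
  by apply: (closed_ext _ (closed_mul HC (CG a Pa) IHr)) => t; rewrite big_cons Pa.
by apply: (closed_ext _ IHr) => t; rewrite big_cons Pa.
Qed.

Local Notation mx_closed := (mx_closed C).

Lemma mx_closed_cst a b (A : 'M[R]_(a, b)) : mx_closed (fun _ => A).
Proof. by move=> i j; apply: (closed_cst HC). Qed.

Lemma mx_closed_matrix a b (G : 'I_a -> 'I_b -> T -> R) :
  (forall i j, C (G i j)) -> mx_closed (fun t => \matrix_(i, j) G i j t).
Proof. by move=> CG i j; apply: (closed_ext _ (CG i j)) => t; rewrite mxE. Qed.

Lemma mx_closed_sub a b (A B : T -> 'M[R]_(a, b)) :
  mx_closed A -> mx_closed B -> mx_closed (fun t => A t - B t).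
Proof.
by move=> CA CB i j; apply: (closed_ext _ (closed_sub (CA i j) (CB i j))) => t; rewrite !mxE.
Qed.

Lemma mx_closed_scale a b (c : T -> R) (A : T -> 'M[R]_(a, b)) :
  C c -> mx_closed A -> mx_closed (fun t => c t *: A t).
Proof.
by move=> Cc CA i j; apply: (closed_ext _ (closed_mul HC Cc (CA i j))) => t; rewrite mxE.
Qed.

Lemma mx_closed_tr a b (A : T -> 'M[R]_(a, b)) : mx_closed A -> mx_closed (fun t => (A t)^T).
Proof. by move=> CA i j; apply: (closed_ext _ (CA j i)) => t; rewrite mxE. Qed.

Lemma mx_closed_sum a b (I : Type) (r : seq I) (P : pred I) (G : I -> T -> 'M[R]_(a, b)) :
  (forall i, P i -> mx_closed (G i)) -> mx_closed (fun t => \sum_(i <- r | P i) G i t).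
Proof.
move=> CG i j; have := closed_sum r (G := fun l t => G l t i j) (fun l Pl => CG l Pl i j).
by apply: closed_ext => t; rewrite summxE.
Qed.

Lemma mx_closed_mul a b c (A : T -> 'M[R]_(a, b)) (B : T -> 'M[R]_(b, c)) :
  mx_closed A -> mx_closed B -> mx_closed (fun t => A t *m B t).
Proof.
move=> CA CB i j; have := closed_sum (index_enum 'I_b) (P := xpredT)
  (fun l _ => closed_mul HC (CA i l) (CB l j)).
by apply: closed_ext => t; rewrite mxE.
Qed.

Lemma closed_mxe a b (A : T -> 'M[R]_(a, b)) i j : mx_closed A -> C (fun t => mxe (A t) i j).
Proof.
rewrite /mxe => CA; case: (insub i : option 'I_a) => [i'|];
  case: (insub j : option 'I_b) => [j'|] //; exact: (closed_cst HC).
Qed.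

Lemma closed_det m (A : T -> 'M[R]_m) : mx_closed A -> C (fun t => \det (A t)).
Proof.
move=> CA; apply: closed_sum => s _; apply: (closed_mul HC (closed_cst HC _)).
by apply: closed_prod => i _; apply: CA.
Qed.

Lemma mx_closed_adj m (A : T -> 'M[R]_m) : mx_closed A -> mx_closed (fun t => \adj (A t)).
Proof.
move=> CA i j; apply: (closed_ext (f := fun t => (-1) ^+ (j + i) * \det (row' j (col' i (A t))))).
  by move=> t; rewrite mxE.
apply: (closed_mul HC (closed_cst HC _)); apply: closed_det => a b.
by apply: (closed_ext _ (CA (lift j a) (lift i b))) => t; rewrite !mxE.
Qed.

Lemma mx_closed_inv m (A : T -> 'M[R]_m) :
  mx_closed A -> (\forall t \near F, A t \in unitmx) -> mx_closed (fun t => invmx (A t)).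
Proof.
move=> CA A_unit i j.
apply: (closed_near HC (f := fun t => (\det (A t))^-1 * \adj (A t) i j)).
  apply: (closed_mul HC); last exact: mx_closed_adj.
  apply: (closed_inv HC); first exact: closed_det.
  by apply: filterS A_unit => t; rewrite unitmxE unitfE.
by apply: filterS A_unit => t A_t_unit; rewrite /invmx A_t_unit [RHS]mxE.
Qed.

Section Estimator.
Context (n k p : nat) (Xt : T -> 'M[R]_(n, k)) (yt : T -> 'cV[R]_n).
Hypotheses (CX : mx_closed Xt) (Cy : mx_closed yt)
  (XX_unit : \forall t \near F, (Xt t)^T *m Xt t \in unitmx).

Lemma mx_closed_beta_hat : mx_closed (fun t => beta_hat (Xt t) (yt t)).
Proof.
apply: mx_closed_mul => //; apply: mx_closed_mul; last exact: mx_closed_tr.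
by apply: mx_closed_inv => //; apply: mx_closed_mul => //; apply: mx_closed_tr.
Qed.

Lemma mx_closed_Vhat : mx_closed (fun t => Vhat (Xt t) (yt t)).
Proof.
apply: mx_closed_matrix => a j; apply: (closed_mul HC (CX _ _)).
by apply: mx_closed_sub => //; apply: mx_closed_mul => //; apply: mx_closed_beta_hat.
Qed.

Lemma mx_closed_Vp : mx_closed (fun t => Vp p (Xt t) (yt t)).
Proof. by apply: mx_closed_matrix => a j; apply: closed_mxe; apply: mx_closed_Vhat. Qed.

Lemma mx_closed_V1 : mx_closed (fun t => V1 p (Xt t) (yt t)).
Proof. by apply: mx_closed_matrix => a j; apply: closed_mxe; apply: mx_closed_Vhat. Qed.

Lemma mx_closed_V1V1 : mx_closed (fun t => V1 p (Xt t) (yt t) *m (V1 p (Xt t) (yt t))^T).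
Proof. by apply: mx_closed_mul; last apply: mx_closed_tr; apply: mx_closed_V1. Qed.

Hypothesis V1V1_unit :
  \forall t \near F, V1 p (Xt t) (yt t) *m (V1 p (Xt t) (yt t))^T \in unitmx.

Lemma mx_closed_Ahat : mx_closed (fun t => Ahat p (Xt t) (yt t)).
Proof.
apply: mx_closed_mul; last exact: mx_closed_inv mx_closed_V1V1 V1V1_unit.
by apply: mx_closed_mul; [apply: mx_closed_Vp | apply: mx_closed_tr; apply: mx_closed_V1].
Qed.

Lemma mx_closed_Zresid : mx_closed (fun t => Zresid p (Xt t) (yt t)).
Proof.
apply: mx_closed_sub; first exact: mx_closed_Vp.
by apply: mx_closed_mul; [apply: mx_closed_Ahat | apply: mx_closed_V1].
Qed.

Lemma near_Zhat : \forall t \near F, Zhat p (Xt t) (yt t) = Some (Zresid p (Xt t) (yt t)).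
Proof. by apply: filterS V1V1_unit => t; apply: Zhat_unitE. Qed.

Lemma mx_closed_sumA : mx_closed (fun t => sumA p (Xt t) (yt t)).
Proof.
apply: mx_closed_matrix => a b; apply: closed_sum => l _.
by apply: closed_mxe; apply: mx_closed_Ahat.
Qed.

End Estimator.

Section LongRunVariance.
Context (k N : nat) (Zt : T -> 'M[R]_(k, N)) (CZ : mx_closed Zt).

Lemma mx_closed_Gam i : mx_closed (fun t => Gam (Zt t) i).
Proof.
apply: mx_closed_scale; first exact: (closed_cst HC).
apply: mx_closed_matrix => a b; apply: closed_sum => j _.
by apply: (closed_mul HC); apply: closed_mxe.
Qed.

Lemma mx_closed_GamZ i : mx_closed (fun t => GamZ (Zt t) i).
Proof.
rewrite /GamZ; case: (0 <= i)%R; first exact: mx_closed_Gam.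
by apply: mx_closed_tr; apply: mx_closed_Gam.
Qed.

Lemma mx_closed_Psi kappa (m : T -> R) :
  (forall j : 'I_(N.*2).-1, C (fun t => kweight kappa (m t) (j%:Z - (N.-1)%:Z))) ->
  mx_closed (fun t => Psi kappa (m t) (Zt t)).
Proof.
by move=> Cw; apply: mx_closed_sum => j _; apply: mx_closed_scale => //; apply: mx_closed_GamZ.
Qed.

Variable w : 'cV[R]_k.

Lemma closed_am_rden i : C (fun t => am_rden (Zt t) i).
Proof. by apply: closed_sum => j _; apply: closed_expr; apply: closed_mxe. Qed.

Section NonzeroRden.
Variable i : nat.
Hypothesis rden_neq0 : \forall t \near F, am_rden (Zt t) i != 0.

Lemma closed_am_rho : C (fun t => am_rho (Zt t) i).
Proof.
apply: closed_div => //; last exact: closed_am_rden.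
by apply: closed_sum => j _; apply: (closed_mul HC); apply: closed_mxe.
Qed.

Lemma closed_am_s2 : C (fun t => am_s2 (Zt t) i).
Proof.
apply: (closed_mul HC (closed_cst HC _)); apply: closed_sum => j _; apply: closed_expr.
by apply: closed_sub; [apply: closed_mxe | apply: (closed_mul HC closed_am_rho); apply: closed_mxe].
Qed.

Lemma closed_am_num_term : C (fun t => 4 * am_rho (Zt t) i ^+ 2 * am_s2 (Zt t) i ^+ 2).
Proof.
apply: (closed_mul HC); last exact: closed_expr 2 closed_am_s2.
exact: (closed_mul HC (closed_cst HC 4) (closed_expr 2 closed_am_rho)).
Qed.

End NonzeroRden.

Lemma am_regular_near jone (i : 'I_k) : (\forall t \near F, am_regular (Zt t) jone) ->
  [/\ \forall t \near F, am_rden (Zt t) i != 0,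
      \forall t \near F, 1 - am_rho (Zt t) i != 0 &
      jone -> \forall t \near F, 1 + am_rho (Zt t) i != 0].
Proof.
move=> reg; split; [| | move=> jone_true];
  by apply: filterS reg => t /forallP/(_ i) /andP[/andP[]] //; rewrite jone_true.
Qed.

Lemma closed_am_den jone : (\forall t \near F, am_regular (Zt t) jone) ->
  C (fun t => am_den w (Zt t)).
Proof.
move=> reg; apply: closed_sum => i _; have [rden_neq0 rho_neq1 _] := am_regular_near i reg.
apply: (closed_mul HC (closed_cst HC _)); apply: closed_div.
- exact: closed_expr 2 (closed_am_s2 rden_neq0).
- exact: closed_expr 4 (closed_sub (closed_cst HC 1) (closed_am_rho rden_neq0)).
- by apply: filterS rho_neq1 => t; apply: expf_neq0.
Qed.

Lemma closed_am_num jone : (\forall t \near F, am_regular (Zt t) jone) ->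
  C (fun t => am_num w (Zt t) jone).
Proof.
move=> reg; rewrite /am_num; case: jone reg => reg; apply: closed_sum => i _;
  have [rden_neq0 rho_neq1 rho_neqN1] := am_regular_near i reg;
  have rho := closed_am_rho rden_neq0;
  apply: (closed_mul HC (closed_cst HC _)); apply: closed_div;
  try exact: closed_am_num_term.
- apply: (closed_mul HC); apply: closed_expr;
    [exact: closed_sub (closed_cst HC 1) rho | exact: (closed_add HC (closed_cst HC 1) rho)].
- apply: filterS (filterI rho_neq1 (rho_neqN1 erefl)) => t [? ?].
  by rewrite mulf_neq0 // expf_neq0.
- exact: closed_expr 8 (closed_sub (closed_cst HC 1) rho).
- by apply: filterS rho_neq1 => t; apply: expf_neq0.
Qed.

Lemma closed_am_base n' jone : (\forall t \near F, am_cond w (Zt t) jone) ->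
  C (fun t => am_base w (Zt t) n' jone).
Proof.
move=> cond; have reg : \forall t \near F, am_regular (Zt t) jone.
  by apply: filterS cond => t /andP[].
apply: (closed_mul HC); last exact: (closed_cst HC).
apply: closed_div; [exact: closed_am_num | exact: closed_am_den reg |].
by apply: filterS cond => t /andP[].
Qed.

Lemma closed_nw_sb i : C (fun t => nw_sb w (Zt t) i).
Proof.
apply: mx_closed_mul; last exact: mx_closed_cst.
by apply: mx_closed_mul; [apply: mx_closed_cst | apply: mx_closed_Gam].
Qed.

Lemma closed_nw_den wt : C (fun t => nw_den w (Zt t) wt).
Proof.
by apply: closed_sum => j _; apply: (closed_mul HC (closed_cst HC _)); apply: closed_nw_sb.
Qed.

Lemma closed_nw_base n' wt c1 : (\forall t \near F, nw_den w (Zt t) wt != 0) ->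
  C (fun t => nw_base w (Zt t) n' wt c1).
Proof.
move=> den_neq0; apply: (closed_mul HC); last exact: (closed_cst HC).
apply: closed_expr; apply: closed_div => //; last exact: closed_nw_den.
by apply: closed_sum => j _; apply: (closed_mul HC (closed_cst HC _)); apply: closed_nw_sb.
Qed.

End LongRunVariance.

Lemma bandwidth_power_form n k p kappa (M : bandwidth R n k)
    (Xt : T -> 'M[R]_(n, k)) (yt : T -> 'cV[R]_n) (Zt : T -> 'M[R]_(k, n - p)) :
  assumptionA p kappa M -> ~ isKV M -> mx_closed Zt ->
  (\forall t \near F, Zhat p (Xt t) (yt t) = Some (Zt t)) ->
  (\forall t \near F, M (Xt t) (yt t) <> None) ->
  exists c c' (s : T -> R), [/\ 0 < c, 0 < c', C s &
    \forall t \near F, M (Xt t) (yt t) = Some (c * powR (s t) c') /\ 0 <= s t].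
Proof.
case=> _ [|[|//]] + _ _ CZ Zhat_eq M_def.
- move=> [c1 [c2 [jone [w [c1_gt0 c2_gt0 [_ w_ge0] M_eq]]]]].
  have cond : \forall t \near F, am_cond w (Zt t) jone.
    apply: filterS2 Zhat_eq M_def => t; rewrite M_eq bw_AM_E => ->.
    by case: ifP.
  exists c1, c2, (fun t => am_base w (Zt t) n jone); split => //.
    exact: closed_am_base.
  apply: filterS2 Zhat_eq cond => t Zhat_t cond_t.
  by rewrite M_eq bw_AM_E Zhat_t cond_t am_base_ge0.
- move=> [wt [c1 [c2 [c3 [w [_ _ [c2_gt0 c3_gt0] _ M_eq]]]]]].
  have den_neq0 : \forall t \near F, nw_den w (Zt t) wt != 0.
    apply: filterS2 Zhat_eq M_def => t; rewrite M_eq bw_NW_E => ->.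
    by case: ifP.
  exists c2, c3, (fun t => nw_base w (Zt t) n wt c1); split => //.
    exact: closed_nw_base.
  apply: filterS2 Zhat_eq den_neq0 => t Zhat_t den_t.
  by rewrite M_eq bw_NW_E Zhat_t den_t nw_base_ge0.
Qed.

End FieldClosedClass.

Section DifferentiableClass.
Context {R : realType} {V : normedModType R}.

Lemma near0_differentiable (h : V -> R) x : (\forall t \near x, h t = 0) -> differentiable h x.
Proof.
move=> h0; have hx0 : h x = 0 by apply: nbhs_singleton h0.
have h_eq : h \o shift x = cst (h x) + \0 +o_ 0 id.
  apply/eqaddoP => e e_gt0; move/nbhs0P: h0 => h0; near=> t.
  have -> : (h \o +%R^~ x - (cst (h x) + \0)) t = 0.
    by rewrite !fctE hx0 addr0 subr0 [t + x]addrC (near h0 t).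
  by rewrite normr0 mulr_ge0 // ltW.
have dh0 : 'd h x = \0 :> (V -> R) by apply: diff_unique => //; exact: cst_continuous.
by apply/diff_locallyP; rewrite dh0; split => //; exact: cst_continuous.
Unshelve. all: by end_near.
Qed.

Lemma near_eq_differentiable (f g : V -> R) x :
  differentiable f x -> (\forall t \near x, f t = g t) -> differentiable g x.
Proof.
move=> df fg; have -> : g = f + (g - f) by apply/funext => t /=; rewrite addrC subrK.
apply: differentiableD => //; apply: near0_differentiable.
by apply: filterS fg => t fg_t; rewrite !fctE fg_t subrr.
Qed.

Lemma differentiable_field_closed x :
  field_closed (nbhs x) (fun f : V -> R => differentiable f x).
Proof.
split=> [|c|f g|f g|f df f_neq0|f g df fg].
- exact: nbhs_filter.
- exact: differentiable_cst.
- exact: differentiableD.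
- exact: differentiableM.
- by apply: differentiableV => //; apply: nbhs_singleton f_neq0.
- exact: near_eq_differentiable fg.
Qed.

Lemma differentiable_near_neq0 (f : V -> R) x :
  differentiable f x -> f x != 0 -> \forall t \near x, f t != 0.
Proof. by move=> /differentiable_continuous; apply: cvgr_neq0. Qed.

Lemma differentiable_near_unitmx m (A : V -> 'M[R]_m) x :
  mx_closed (fun f => differentiable f x) A -> A x \in unitmx ->
  \forall t \near x, A t \in unitmx.
Proof.
move=> dA; rewrite unitmxE unitfE => det_neq0.
have : \forall t \near x, \det (A t) != 0.
  exact: differentiable_near_neq0 (closed_det (differentiable_field_closed x) dA) det_neq0.
by apply: filterS => t; rewrite unitmxE unitfE.
Qed.

Lemma am_cond_near k N jone (w : 'cV[R]_k) (Z : V -> 'M[R]_(k, N)) x :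
  mx_closed (fun f => differentiable f x) Z -> am_cond w (Z x) jone ->
  \forall t \near x, am_cond w (Z t) jone.
Proof.
have HC := differentiable_field_closed x.
move=> dZ /andP[/forallP reg_x den_x].
have reg_i (i : 'I_k) : \forall t \near x, (am_rden (Z t) i != 0) &&
    (1 - am_rho (Z t) i != 0) && (jone ==> (1 + am_rho (Z t) i != 0)).
  have /andP[/andP[rden_x rho_x] rhoN_x] := reg_x i.
  have drden : differentiable (fun t => am_rden (Z t) i) x := closed_am_rden HC dZ i.
  have rden := differentiable_near_neq0 drden rden_x.
  have drho : differentiable (fun t => am_rho (Z t) i) x := closed_am_rho HC dZ rden.
  have drho1 : differentiable (fun t => 1 - am_rho (Z t) i) x :=
    closed_sub HC (closed_cst HC 1) drho.
  have rhoN : \forall t \near x, jone ==> (1 + am_rho (Z t) i != 0).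
    case: jone {reg_x} rhoN_x => /= [rhoN_x|_]; last exact: nearW.
    have drhoN : differentiable (fun t => 1 + am_rho (Z t) i) x :=
      closed_add HC (closed_cst HC 1) drho.
    exact: differentiable_near_neq0 drhoN rhoN_x.
  by apply: filterS3 rden (differentiable_near_neq0 drho1 rho_x) rhoN => t -> -> ->.
have reg : \forall t \near x, am_regular (Z t) jone.
  by apply: filterS (filter_forall _ reg_i) => t /forallP.
have dden : differentiable (fun t => am_den w (Z t)) x := closed_am_den HC dZ w reg.
by apply: filterS2 reg (differentiable_near_neq0 dden den_x) => t; rewrite /am_cond => -> ->.
Qed.

End DifferentiableClass.

Lemma mx_closed_differentiable_id (R : realType) n (z : 'cV[R]_n) :
  mx_closed (fun f => differentiable f z) (fun y : 'cV[R]_n => y).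
Proof. by move=> i j; exact: differentiable_coord. Qed.

Section DifferentiableStatistic.
Context {R : realType} {n k p : nat} (X : 'M[R]_(n, k)) (rkX : \rank X = k).
Variable z : 'cV[R]_n.

Local Notation diff_at := (fun f : 'cV[R]_n -> R => differentiable f z).
Let HC := differentiable_field_closed z.
Let CX : mx_closed diff_at (fun _ => X) := mx_closed_cst HC X.
Let Cy : mx_closed diff_at id := mx_closed_differentiable_id z.
Let XX_unit : \forall t \near z, X^T *m X \in unitmx.
Proof. near=> t; exact: XtX_unit. Unshelve. all: by end_near. Qed.

Hypothesis Zhat_z : Zhat p X z <> None.

Lemma near_V1V1_unit : \forall t \near z, V1 p X t *m (V1 p X t)^T \in unitmx.
Proof.
apply: (differentiable_near_unitmx (mx_closed_V1V1 HC CX Cy XX_unit)).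
exact: Zhat_unit Zhat_z.
Qed.

Lemma differentiable_Zresid : mx_closed diff_at (Zresid p X).
Proof. by move=> i j; exact: (mx_closed_Zresid HC CX Cy XX_unit near_V1V1_unit i j). Qed.

Lemma differentiable_sumA : mx_closed diff_at (sumA p X).
Proof. by move=> i j; exact: (mx_closed_sumA HC CX Cy XX_unit near_V1V1_unit i j). Qed.

Lemma near_Zhat_Zresid : \forall t \near z, Zhat p X t = Some (Zresid p X t).
Proof. exact: (near_Zhat HC near_V1V1_unit). Qed.

Lemma bandwidth_defined_near kappa (M : bandwidth R n k) :
  assumptionA p kappa M -> ~ isKV M -> M X z <> None -> \forall t \near z, M X t <> None.
Proof.
have Zhat_zE := Zhat_unitE (Zhat_unit Zhat_z).
case=> _ [|[|//]] + _ _; last first.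
- move=> [wt [c1 [c2 [c3 [w [_ _ _ _ M_eq]]]]]].
  rewrite M_eq bw_NW_E Zhat_zE; case: ifP => // den_z _.
  have dden := closed_nw_den HC differentiable_Zresid w wt.
  apply: filterS2 near_Zhat_Zresid (differentiable_near_neq0 dden den_z) => t Zhat_t den_t.
  by rewrite M_eq bw_NW_E Zhat_t den_t.
- move=> [c1 [c2 [jone [w [_ _ _ M_eq]]]]].
  rewrite M_eq bw_AM_E Zhat_zE; case: ifP => // cond_z _.
  apply: filterS2 near_Zhat_Zresid (am_cond_near differentiable_Zresid cond_z) => t Zhat_t cond_t.
  by rewrite M_eq bw_AM_E Zhat_t cond_t.
Qed.

Lemma bandwidth_near_power kappa (M : bandwidth R n k) :
  assumptionA p kappa M -> ~ isKV M -> M X z <> None ->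
  exists c c' (s : 'cV[R]_n -> R), [/\ 0 < c, 0 < c', differentiable s z &
    \forall t \near z, M X t = Some (c * powR (s t) c') /\ 0 <= s t].
Proof.
move=> HA nKV M_z.
exact: (bandwidth_power_form HC HA nKV differentiable_Zresid near_Zhat_Zresid
  (bandwidth_defined_near HA nKV M_z)).
Qed.

Lemma Tstat_differentiable q kappa (M : bandwidth R n k) (Rm : 'M[R]_(q, k))
    (r : 'cV[R]_q) (m : 'cV[R]_n -> R) :
  ~ Nstar p kappa M X Rm z ->
  (\forall t \near z, M X t = Some (m t)) ->
  (forall j : 'I_((n - p).*2).-1,
     differentiable (fun t => kweight kappa (m t) (j%:Z - ((n - p).-1)%:Z)) z) ->
  differentiable (Tstat p kappa M X Rm r) z.
Proof.
move=> /Omega_hat_defined [Om [_ _ G_unit Om_z Om_unit]] M_near dw.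
have dG : mx_closed diff_at (fun t => 1%:M - sumA p X t).
  exact: (mx_closed_sub HC (mx_closed_cst HC 1%:M) differentiable_sumA).
have G_near := differentiable_near_unitmx dG G_unit.
pose Omf t := n%:R *: (Rm *m invmx (X^T *m X) *m invmx (1%:M - sumA p X t)
  *m Psi kappa (m t) (Zresid p X t) *m (invmx (1%:M - sumA p X t))^T
  *m invmx (X^T *m X) *m Rm^T).
have dOm : mx_closed diff_at Omf.
  apply: (mx_closed_scale HC); first exact: (closed_cst HC).
  do 2 (apply: (mx_closed_mul HC); last exact: (mx_closed_cst HC)).
  have dF := mx_closed_inv HC dG G_near.
  apply: (mx_closed_mul HC); last exact: (mx_closed_tr HC).
  apply: (mx_closed_mul HC); last exact: (mx_closed_Psi HC differentiable_Zresid dw).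
  by apply: (mx_closed_mul HC) => //; apply: (mx_closed_mul HC); exact: (mx_closed_cst HC).
have Om_near : \forall t \near z, Omega_hat p kappa M X Rm t = Some (Omf t).
  apply: filterS3 near_Zhat_Zresid M_near G_near => t Zhat_t M_t G_t.
  by rewrite /Omega_hat Zhat_t M_t G_t.
have Om_unit_near : \forall t \near z, Omf t \in unitmx.
  apply: (differentiable_near_unitmx dOm).
  by move: (nbhs_singleton Om_near); rewrite Om_z => -[<-].
pose d t := Rm *m beta_hat X t - r.
have dd : mx_closed diff_at d.
  apply: (mx_closed_sub HC); last exact: (mx_closed_cst HC).
  apply: (mx_closed_mul HC (mx_closed_cst HC Rm)).
  by move=> i j; exact: (mx_closed_beta_hat HC CX Cy XX_unit i j).
have dT : differentiable (fun t => ((d t)^T *m invmx (Omf t) *m d t) ord0 ord0) z.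
  apply: (mx_closed_mul HC) => //; apply: (mx_closed_mul HC); first exact: (mx_closed_tr HC).
  exact: (mx_closed_inv HC dOm Om_unit_near).
apply: (closed_near HC dT).
by apply: filterS2 Om_near Om_unit_near => t Om_t Om_t_unit; rewrite /Tstat Om_t Om_t_unit.
Qed.

End DifferentiableStatistic.

Section KernelWeights.
Context {R : realType} {V : normedModType R} (kappa : R -> R).

Lemma kweight_differentiable (m : V -> R) z (i : int) :
  differentiable m z -> m z != 0 -> (i != 0 -> differentiable kappa (i%:~R / m z)) ->
  differentiable (fun t => kweight kappa (m t) i) z.
Proof.
move=> dm mz_neq0 dkappa; have m_neq0 := differentiable_near_neq0 dm mz_neq0.
have [->|i_neq0] := eqVneq i 0.
  apply: (near_eq_differentiable (differentiable_cst (kappa 0) z)).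
  by apply: filterS m_neq0 => t mt_neq0; rewrite /kweight (negbTE mt_neq0) mul0r.
have dg : differentiable (fun t => i%:~R / m t) z.
  by apply: differentiableM => //; exact: differentiableV.
apply: (near_eq_differentiable (differentiable_comp dg (dkappa i_neq0))).
by apply: filterS m_neq0 => t mt_neq0; rewrite /kweight (negbTE mt_neq0).
Qed.

Lemma kweight_small_bandwidth_differentiable (m : V -> R) z (B : R) :
  0 < B -> (forall x, kappa x != 0 -> `|x| < B) -> kappa 0 = 1 ->
  (\forall t \near z, `|m t| < B^-1) ->
  forall i : int, differentiable (fun t => kweight kappa (m t) i) z.
Proof.
move=> B_gt0 kappa_supp kappa0 m_small i.
have [->|i_neq0] := eqVneq i 0.
  apply: (near_eq_differentiable (differentiable_cst (1 : R) z)); apply: nearW => t.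
  by rewrite /kweight eqxx mul0r kappa0; case: ifP.
apply: (near_eq_differentiable (differentiable_cst (0 : R) z)).
apply: filterS m_small => t mt_small; rewrite /kweight (negbTE i_neq0).
case: ifPn => // mt_neq0; apply/esym/eqP; apply: contraT => /kappa_supp.
rewrite normrM normfV ltr_pdivrMr ?normr_gt0 // => i_lt.
have i_ge1 : 1 <= `|i%:~R : R| by apply: norm_intr_ge1; [apply: intr_int | rewrite intr_eq0].
have Bm_lt1 : B * `|m t| < 1 by rewrite -(mulfV (lt0r_neq0 B_gt0)) ltr_pM2l.
by have := lt_trans (le_lt_trans i_ge1 i_lt) Bm_lt1; rewrite ltxx.
Qed.

End KernelWeights.

Lemma compact_support_bounded (R : realType) (kappa : R -> R) :
  compact (closure [set x | kappa x != 0]) ->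
  exists2 B : R, 0 < B & forall x, kappa x != 0 -> `|x| < B.
Proof.
move=> /compact_bounded [B [_ B_bound]]; exists (`|B| + 2) => [|x kappa_x].
  exact: ltr_wpDl.
have B_lt : B < `|B| + 1 by apply: (le_lt_trans (ler_norm B)); rewrite ltrDl.
have x_le := B_bound _ B_lt x (@subset_closure _ [set x | kappa x != 0] x kappa_x).
by apply: (le_lt_trans x_le); rewrite ltrD2l ltr1n.
Qed.

Lemma scaled_powR_eq (R : realType) (c c' s d : R) : 0 < c -> 0 < c' -> 0 <= s -> 0 <= d ->
  (c * powR s c' = d <-> s = powR (d / c) c'^-1).
Proof.
move=> c_gt0 c'_gt0 s_ge0 d_ge0; split=> [<-|->].
  by rewrite (mulrC c) mulfK ?gt_eqF // -powRrM mulfV ?gt_eqF // powRr1.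
rewrite -powRrM mulVf ?gt_eqF // powRr1; last by rewrite divr_ge0 // ltW.
by rewrite mulrC divfK ?gt_eqF.
Qed.

Lemma near_scaled_powR_small (R : realType) (V : normedModType R) (s : V -> R) z (c c' e : R) :
  0 < c -> 0 < c' -> 0 < e -> {for z, continuous s} -> s z = 0 ->
  (\forall t \near z, 0 <= s t) -> \forall t \near z, `|c * powR (s t) c'| < e.
Proof.
move=> c_gt0 c'_gt0 e_gt0 s_cont sz0 s_ge0.
pose th := powR (e / c) c'^-1.
have th_ge0 : 0 <= th by apply: powR_ge0.
have th_pow : c * powR th c' = e.
  by apply/scaled_powR_eq => //; rewrite ltW.
have s_lt : \forall t \near z, s t < th.
  by apply: (cvgr_lt (s z) s_cont); rewrite sz0 powR_gt0 // divr_gt0.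
apply: filterS2 s_ge0 s_lt => t st_ge0 st_lt.
rewrite ger0_norm ?mulr_ge0 ?powR_ge0 ?ltW // -th_pow ltr_pM2l //.
by apply: gt0_ltr_powR; rewrite ?nnegrE.
Qed.

Lemma nonzero_lag_range (R : realType) (N j : nat) : (j < (N.*2).-1)%N ->
  (j%:Z - (N.-1)%:Z)%R != 0 ->
  exists2 a : nat, (1 <= a <= N.-1)%N &
    ((j%:Z - (N.-1)%:Z)%:~R = a%:R :> R \/ (j%:Z - (N.-1)%:Z)%:~R = - a%:R :> R).
Proof.
move=> j_lt; case E: (j%:Z - (N.-1)%:Z)%R => [a|a] a_neq0.
  by exists a; [apply/andP; split; lia | left].
exists a.+1; first by apply/andP; split; lia.
by right; rewrite NegzE mulrNz.
Qed.

Lemma Tstat_differentiable_kernel (R : realType) (n k p q : nat) (kappa : R -> R)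
    (M : bandwidth R n k) (X : 'M[R]_(n, k)) (Rm : 'M[R]_(q, k)) (r : 'cV[R]_q)
    (Delta : set R) (z : 'cV[R]_n) :
  assumptionA p kappa M -> ~ isKV M -> \rank X = k ->
  (forall x, ~ Delta x -> derivable kappa x 1) ->
  ~ Nstar p kappa M X Rm z ->
  (exists m : R, [/\ M X z = Some m, m != 0 &
      forall i : nat, (1 <= i <= n - p - 1)%N ->
        ~ Delta (i%:R / m) /\ ~ Delta (- (i%:R / m))])
  \/ (M X z = Some 0 /\ compact (closure [set x : R | kappa x != 0])) ->
  differentiable (Tstat p kappa M X Rm r) z.
Proof.
move=> HA nKV rkX dkappa Nz bandwidth_z.
have [_ [Zhat_z M_z _ _ _]] := Omega_hat_defined Nz.
have [c [c' [s [c_gt0 c'_gt0 ds M_near]]]] := bandwidth_near_power rkX Zhat_z HA nKV M_z.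
have [M_zE sz_ge0] := nbhs_singleton M_near.
apply: (Tstat_differentiable rkX Zhat_z r Nz (m := fun t => c * powR (s t) c')).
  by apply: filterS M_near => t [].
case: bandwidth_z => [[m [M_zm m_neq0 Delta_free]] | [M_z0 kappa_compact]].
- have m_eq : c * powR (s z) c' = m by move: M_zm; rewrite M_zE => -[].
  have sz_gt0 : 0 < s z.
    rewrite lt_def sz_ge0 andbT; apply: contraNneq m_neq0 => sz0.
    by rewrite -m_eq sz0 powR0 ?mulr0 // gt_eqF.
  have dpowR : differentiable (fun x : R => powR x c') (s z).
    by apply/derivable1_diffP; apply: derivable_powR; rewrite in_itv /= sz_gt0.
  have dpow : differentiable (fun t => c * powR (s t) c') z.
    apply: differentiableM; first exact: differentiable_cst.
    exact: differentiable_comp ds dpowR.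
  move=> j; apply: kweight_differentiable dpow _ _; first by rewrite m_eq.
  move=> lag_neq0; apply/derivable1_diffP; apply: dkappa; rewrite m_eq.
  have [a a_range lag_eq] := nonzero_lag_range R (ltn_ord j) lag_neq0.
  have [] : ~ Delta (a%:R / m) /\ ~ Delta (- (a%:R / m)) by apply: Delta_free; rewrite subn1.
  by case: lag_eq => ->; rewrite ?mulNr.
- have sz0 : s z = 0.
    move: M_z0; rewrite M_zE => -[] /eqP; rewrite mulf_eq0 gt_eqF //=.
    by move=> /eqP /powR_eq0_eq0.
  have [B B_gt0 B_supp] := compact_support_bounded kappa_compact.
  have kappa0 : kappa 0 = 1 by case: HA => [[_ [_ []]]].
  move=> j; apply: (kweight_small_bandwidth_differentiable B_gt0 B_supp kappa0).
  apply: near_scaled_powR_small; rewrite ?invr_gt0 //.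
    exact: differentiable_continuous.
  by apply: filterS M_near => t [].
Qed.

Section RationalFunctions.
Context {R : realType} {V T : Type} (env : T -> V -> R) (D : set T).

Definition rational_on (f : T -> R) : Prop :=
  exists a b : pexpr R V, forall t, D t ->
    peval (env t) b != 0 /\ f t = peval (env t) a / peval (env t) b.

Lemma rational_on_var v : rational_on (fun t => env t v).
Proof. by exists (PVar R v), (PConst V 1) => t _ /=; rewrite oner_neq0 divr1. Qed.

Lemma rational_on_field_closed : field_closed (globally D) rational_on.
Proof.
split.
- exact: globally_filter.
- by move=> c; exists (PConst V c), (PConst V 1) => t _ /=; rewrite oner_neq0 divr1.
- move=> f g [a1 [b1 f_eq]] [a2 [b2 g_eq]].
  exists (PAdd (PMul a1 b2) (PMul a2 b1)), (PMul b1 b2) => t Dt /=.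
  have [b1_neq0 ->] := f_eq t Dt; have [b2_neq0 ->] := g_eq t Dt.
  by rewrite mulf_neq0 // addf_div.
- move=> f g [a1 [b1 f_eq]] [a2 [b2 g_eq]].
  exists (PMul a1 a2), (PMul b1 b2) => t Dt /=.
  have [b1_neq0 ->] := f_eq t Dt; have [b2_neq0 ->] := g_eq t Dt.
  by rewrite mulf_neq0 // mulf_div.
- move=> f [a [b f_eq]] f_neq0; exists b, a => t Dt.
  have [b_neq0 ft] := f_eq t Dt; have := f_neq0 t Dt; rewrite ft => ab_neq0.
  split; last by rewrite invf_div.
  by apply: contraNneq ab_neq0 => ->; rewrite mul0r.
- by move=> f g [a [b f_eq]] fg; exists a, b => t Dt; rewrite -(fg t Dt); apply: f_eq.
Qed.

End RationalFunctions.

Lemma bandwidth_level_set_polynomial (R : realType) (n k p : nat) (kappa : R -> R)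
    (M : bandwidth R n k) (delta : R) :
  assumptionA p kappa M -> ~ isKV M -> 0 <= delta ->
  exists g : pexpr R ('I_n + ('I_n * 'I_k)),
    forall X : 'M[R]_(n, k), \rank X = k ->
    forall (q : nat) (Rm : 'M[R]_(q, k)), (1 <= q)%N -> \rank Rm = q ->
    forall y : 'cV[R]_n,
      (~ Nstar p kappa M X Rm y /\ M X y = Some delta) <->
      (~ Nstar p kappa M X Rm y /\ peval (yX_env y X) g = 0).
Proof.
move=> HA nKV delta_ge0.
pose D (t : 'cV[R]_n * 'M[R]_(n, k)) :=
  [/\ \rank t.2 = k, Zhat p t.2 t.1 <> None & M t.2 t.1 <> None].
pose env (t : 'cV[R]_n * 'M[R]_(n, k)) := yX_env t.1 t.2.
have HC := rational_on_field_closed env D.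
have CX : mx_closed (rational_on env D) (fun t => t.2).
  by move=> i j; apply: (rational_on_var env D (inr (i, j))).
have Cy : mx_closed (rational_on env D) (fun t => t.1).
  by move=> i j; rewrite (ord1 j); apply: (rational_on_var env D (inl i)).
have XX_unit : \forall t \near globally D, t.2^T *m t.2 \in unitmx.
  by move=> t [rk _ _]; apply: XtX_unit.
have V1V1_unit : \forall t \near globally D, V1 p t.2 t.1 *m (V1 p t.2 t.1)^T \in unitmx.
  by move=> t [_ Zhat_t _]; apply: Zhat_unit.
have M_def : \forall t \near globally D, M t.2 t.1 <> None by move=> t [].
have [c [c' [s [c_gt0 c'_gt0 [a [b s_eq]] M_eq]]]] :=
  bandwidth_power_form HC HA nKV (mx_closed_Zresid HC CX Cy XX_unit V1V1_unit)
    (near_Zhat HC V1V1_unit) M_def.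
pose th := powR (delta / c) c'^-1.
exists (PAdd a (PMul (PConst _ (- th)) b)) => X rkX q Rm _ _ y.
split=> -[Ny level]; split => //;
  have [_ [Zhat_y M_y _ _ _]] := Omega_hat_defined Ny;
  have Dt : D (y, X) by [];
  have [[b_neq0 s_t] [M_t s_ge0]] := (s_eq _ Dt, M_eq _ Dt).
- have s_th : s (y, X) = th.
    by apply/scaled_powR_eq => //; move: level; rewrite M_t => -[].
  by rewrite /= -s_th s_t mulNr divfK ?subrr.
- rewrite M_t; congr Some; apply/scaled_powR_eq => //.
  rewrite s_t; apply: (mulIf b_neq0); rewrite divfK //; apply/eqP.
  by rewrite -subr_eq0 -mulNr; move: level => /= ->.
Qed.

Theorem lemmaB2 (R : realType) (n k p : nat) (kappa : R -> R) (M : bandwidth R n k)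
  (Hn : (2 < n)%N) (Hk : (1 <= k)%N /\ (k < n)%N)
  (HA : assumptionA p kappa M)
  (X : 'M[R]_(n, k)) (HX : \rank X = k)
  (q : nat) (Rm : 'M[R]_(q, k)) (r : 'cV[R]_q) (Hq : (1 <= q)%N) (HR : \rank Rm = q)
  (mu0 : 'cV[R]_n) (Hmu0 : exists beta : 'cV[R]_k, Rm *m beta = r /\ mu0 = X *m beta) :
  (* 1. *)
  (isKV M ->
     forall y : 'cV[R]_n, ~ Nstar p kappa M X Rm y ->
       differentiable (Tstat p kappa M X Rm r) (mu0 + y))
  /\
  (* 2. *)
  (~ isKV M ->
     forall Delta : set R, closed Delta -> ~` Delta !=set0 ->
     (forall x, ~ Delta x -> derivable kappa x 1 /\ {for x, continuous kappa^`()}) ->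
     forall y : 'cV[R]_n, ~ Nstar p kappa M X Rm y ->
       ((exists m : R, [/\ M X y = Some m, m != 0 &
            forall i : nat, (1 <= i <= n - p - 1)%N ->
              ~ Delta (i%:R / m) /\ ~ Delta (- (i%:R / m))])
        \/ (M X y = Some 0 /\ compact (closure [set x : R | kappa x != 0]))) ->
       differentiable (Tstat p kappa M X Rm r) (mu0 + y))
  /\
  (* 3. *)
  (~ isKV M ->
     forall delta : R, 0 <= delta ->
     exists g : pexpr R ('I_n + ('I_n * 'I_k)),
       forall X' : 'M[R]_(n, k), \rank X' = k ->
       forall (q' : nat) (R' : 'M[R]_(q', k)), (1 <= q')%N -> \rank R' = q' ->
       forall y : 'cV[R]_n,
         (~ Nstar p kappa M X' R' y /\ M X' y = Some delta) <->
         (~ Nstar p kappa M X' R' y /\ peval (yX_env y X') g = 0)).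
Proof.
have [beta [_ ->]] := Hmu0; have XX_unit := XtX_unit HX.
have shiftN y : ~ Nstar p kappa M X Rm y -> ~ Nstar p kappa M X Rm (X *m beta + y).
  by move=> Ny /(Nstar_shift beta XX_unit Rm y HA).
split; [|split].
- move=> [c [_ M_eq]] y /shiftN Nz.
  have [_ [Zhat_z _ _ _ _]] := Omega_hat_defined Nz.
  apply: (Tstat_differentiable HX Zhat_z r Nz (m := fun=> c)).
    by near=> t; apply: M_eq.
  by move=> j; apply: differentiable_cst.
-
  move=> nKV Delta _ _ dkappa y /shiftN Nz bandwidth_y.
  apply: (Tstat_differentiable_kernel r HA nKV HX (fun x Dx => (dkappa x Dx).1) Nz).
  by rewrite (bandwidth_shift beta XX_unit y HA).
- by move=> nKV delta delta_ge0; apply: bandwidth_level_set_polynomial.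
Unshelve. all: by end_near.
Qed.
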